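(* Let $(\Omega,\mathcal{F},\mathbb{P})$ be an atomless probability space, $Z_t$ an $\mathbb{R}^D$-valued random vector, and $V_t,U_t$ real-valued functions on a set $S\subseteq\mathbb{R}^D$ containing the range of $Z_t$, such that $X_t=V_t(Z_t)^+$ and $Y_t=U_t(Z_t)^+$ are random variables. Let $z_t^1,\dots,z_t^n\in S$ and $\mathbf{y}_t=(U_t(z_t^i)^+)_{i=1}^n$. Then for any exposure measure $\rho$, \[ \left|\rho(X_t)-\widehat{\rho}(\mathbf{y}_t)\right|\le \Vert V_t-U_t\Vert_\infty+\left|\rho(Y_t)-\widehat{\rho}(\mathbf{y}_t)\right|. \]
   Context: $x^+=\max\{x,0\}$. An exposure measure is a map $\rho:L^0(\Omega,\mathcal{F},\mathbb{P})\to\mathbb{R}\cup\{\infty\}$ that is monotone ($X_1\le X_2\Rightarrow\rho(X_1)\le\rho(X_2)$) and cash-additive ($\rho(X+c)=\rho(X)+c$ for $c\in\mathbb{R}$). For a finite sample $\mathbf{y}=(y^i)_{i=1}^n$, $F_{\mathbf{y}}(x)=\frac1n\sum_{i=1}^n\mathbb{1}_{\{x\ge y^i\}}$ is the empirical distribution and $\widehat\rho(\mathbf{y})=\rho(F_{\mathbf{y}})$ is the empirical estimator, i.e. $\rho$ evaluated at a random variable with distribution $F_{\mathbf{y}}$. $\Vert V_t-U_t\Vert_\infty=\sup_{s\in S}|V_t(s)-U_t(s)|$ (genuine supremum, possibly $+\infty$, in which case the claim is trivial). *)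

From HB Require Import structures.
From mathcomp Require Import all_boot all_order all_algebra.
From mathcomp Require Import all_classical all_reals all_analysis.
Set Implicit Arguments. Unset Strict Implicit. Unset Printing Implicit Defensive.
Import Order.TTheory GRing.Theory Num.Theory.
Local Open Scope classical_set_scope.
Local Open Scope ring_scope.

Definition atomless d (T : measurableType d) (R : realType)
  (P : probability T R) : Prop :=
  forall A : set T, measurable A -> (0 < P A)%E ->
    exists B : set T, [/\ measurable B, B `<=` A, (0 < P B)%E & (P B < P A)%E].

Definition exposure_measure d (T : measurableType d) (R : realType)
  (P : probability T R) (rho : (T -> R) -> \bar R) : Prop :=
  [/\ (forall X : T -> R, measurable_fun setT X -> rho X != -oo%E),
      (forall X1 X2 : T -> R, measurable_fun setT X1 -> measurable_fun setT X2 ->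
         {ae P, forall w, X1 w <= X2 w} -> (rho X1 <= rho X2)%E)
    & (forall (X : T -> R) (c : R), measurable_fun setT X ->
         rho (fun w => X w + c) = (rho X + c%:E)%E)].

Definition emp_cdf (R : realType) (n : nat) (y : 'I_n -> R) (x : R) : R :=
  (#|[set i : 'I_n | y i <= x]|%:R / n%:R).

Definition has_emp_distribution d (T : measurableType d) (R : realType)
  (P : probability T R) (n : nat) (y : 'I_n -> R) (W : T -> R) : Prop :=
  measurable_fun setT W /\
  forall x : R, P [set w | W w <= x] = (emp_cdf y x)%:E.

Definition sup_dist (R : realType) (A : Type) (S : set A) (V U : A -> R)
  : \bar R :=
  ereal_sup [set (`|V s - U s|)%:E | s in S].

From HB Require Import structures.
From mathcomp Require Import all_boot all_order all_algebra.
From mathcomp Require Import all_classical all_reals all_analysis.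
From mathcomp Require Import measurable_realfun lra.
Set Implicit Arguments. Unset Strict Implicit. Unset Printing Implicit Defensive.
Import Order.TTheory GRing.Theory Num.Theory.
Local Open Scope classical_set_scope.
Local Open Scope ring_scope.

(* The positive part is 1-Lipschitz, so |X - Y| <= ||V - U||_oo pointwise;
   monotonicity and cash-additivity then give rho X <= rho Y + ||V - U||_oo
   and symmetrically, and the claim is the triangle inequality for
   |rho X - r| with r = rho(W), carried out in the extended reals. *)

Lemma ler_dist_max0 (R : realDomainType) (a b : R) :
  `|Num.max a 0 - Num.max b 0| <= `|a - b|.
Proof.
have := ler_norm (a - b); have := ler_norm (b - a); rewrite distrC => h1 h2.
by rewrite ler_norml; case: (lerP a 0) => ha; case: (lerP b 0) => hb;
  apply/andP; split; lra.
Qed.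

Lemma lee_abse_sub_shift (R : realDomainType) (x y r : \bar R) (c : R) :
  (x <= y + c%:E)%E -> (y <= x + c%:E)%E ->
  (`|x - r| <= c%:E + `|y - r|)%E.
Proof.
case: x => [x| |]; case: y => [y| |]; case: r => [r| |] //=;
  rewrite ?leey ?leNye //= ?lee_fin.
move=> hxy hyx; rewrite -lee_fin EFinD lee_fin.
have := ler_normD (x - y) (y - r); rewrite addrA subrK.
suff : `|x - y| <= c by lra.
by rewrite ler_norml; apply/andP; split; lra.
Qed.

Section ExposureMeasure.
Variables (d : measure_display) (T : measurableType d) (R : realType).
Variables (P : probability T R) (rho : (T -> R) -> \bar R).
Hypothesis rhoE : exposure_measure P rho.

Lemma exposure_measure_le_shift (X Y : T -> R) (c : R) :
  measurable_fun setT X -> measurable_fun setT Y ->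
  {ae P, forall w, X w <= Y w + c} -> (rho X <= rho Y + c%:E)%E.
Proof.
case: rhoE => _ rho_mono rho_cash mX mY XY.
rewrite -rho_cash //; apply: rho_mono => //.
by apply: measurable_funD => //; exact: measurable_cst.
Qed.

Lemma exposure_measure_abse_sub_le (X Y : T -> R) (c : R) (r : \bar R) :
  measurable_fun setT X -> measurable_fun setT Y ->
  (forall w, `|X w - Y w| <= c) ->
  (`|rho X - r| <= c%:E + `|rho Y - r|)%E.
Proof.
move=> mX mY XY; apply: lee_abse_sub_shift; apply: exposure_measure_le_shift => //;
  apply: aeW => w; have := XY w; rewrite ?(distrC (X w)) ler_norml; lra.
Qed.

End ExposureMeasure.

Lemma sup_dist_ub (R : realType) (A : Type) (S : set A) (V U : A -> R) (s : A) :
  S s -> ((`|V s - U s|)%:E <= sup_dist S V U)%E.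
Proof. by move=> Ss; apply: ereal_sup_ubound; exists s. Qed.

Theorem proposition1p2 (d : measure_display) (T : measurableType d)
  (R : realType) (P : probability T R) (D : nat)
  (Z : T -> 'rV[R]_D) (S : set 'rV[R]_D) (V U : 'rV[R]_D -> R)
  (n : nat) (z : 'I_n -> 'rV[R]_D)
  (rho : (T -> R) -> \bar R) (W : T -> R) :
  atomless P ->
  (forall i : 'I_D, measurable_fun setT (fun w => Z w ord0 i)) ->
  (forall w, S (Z w)) ->
  measurable_fun setT (fun w => Num.max (V (Z w)) 0) ->
  measurable_fun setT (fun w => Num.max (U (Z w)) 0) ->
  (0 < n)%N ->
  (forall i, S (z i)) ->
  exposure_measure P rho ->
  has_emp_distribution P (fun i => Num.max (U (z i)) 0) W ->
  (`| rho (fun w => Num.max (V (Z w)) 0%R) - rho W |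
     <= sup_dist S V U + `| rho (fun w => Num.max (U (Z w)) 0%R) - rho W |)%E.
Proof.
move=> _ _ SZ mX mY n_gt0 Sz rhoE _.
have sup_ge0 : (0 <= sup_dist S V U)%E.
  by apply: le_trans (sup_dist_ub V U (Sz (Ordinal n_gt0))); rewrite lee_fin.
case Esup: (sup_dist S V U) sup_ge0 => [c| |] // _.
- apply: (exposure_measure_abse_sub_le rhoE); [exact: mX | exact: mY | move=> w].
  apply: le_trans (ler_dist_max0 _ _) _.
  by rewrite -lee_fin -Esup; exact: sup_dist_ub (SZ w).
- by rewrite addye ?leey // gt_eqF // (lt_le_trans (ltNyr 0)) // abse_ge0.
Qed.
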